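(* Let $K$ be any finite index subgroup of $F_2$, and suppose that $K$ contains an element of odd length. Then there is an $N$ such that for every $n\geq N$, $K$ contains an element of length $n$.
   Context: $F_2$ is the free group on $a,b$, $\Xi=\{a,b,a^{-1},b^{-1}\}$, and an element has length $n$ if its reduced word $x_1\cdots x_n$ ($x_i\in\Xi$, $x_{i+1}\neq x_i^{-1}$) has $n$ letters. *)

From mathcomp Require Import all_boot.
Set Implicit Arguments. Unset Strict Implicit. Unset Printing Implicit Defensive.

Inductive letter := La | Lb | LaI | LbI.

Definition linv (x : letter) : letter :=
  match x with La => LaI | Lb => LbI | LaI => La | LbI => Lb end.

Definition is_inv (x y : letter) : bool :=
  match x, y with
  | La, LaI | LaI, La | Lb, LbI | LbI, Lb => true
  | _, _ => false
  end.

Definition word := seq letter.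

Fixpoint reduced (w : word) : bool :=
  match w with
  | x :: ((y :: _) as w') => ~~ is_inv x y && reduced w'
  | _ => true
  end.

Definition push (x : letter) (w : word) : word :=
  match w with
  | y :: w' => if is_inv x y then w' else x :: w
  | [::] => [:: x]
  end.

Definition reduce (s : word) : word := foldr push [::] s.

Definition F2 (w : word) : Prop := reduced w.
Definition wmul (u v : word) : word := reduce (u ++ v).
Definition winv (u : word) : word := rev (map linv u).

Definition wlength (w : word) : nat := size w.

Definition is_subgroup (K : word -> Prop) : Prop :=
  [/\ (forall w, K w -> F2 w),
      K [::],
      (forall u v, K u -> K v -> K (wmul u v)) &
      (forall u, K u -> K (winv u))].

(* K has finite index: finitely many left cosets g K cover F_2. *)
Definition finite_index (K : word -> Prop) : Prop :=
  exists reps : seq word,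
    all reduced reps /\
    forall w, F2 w ->
      exists2 i, i < size reps & K (wmul (winv (nth [::] reps i)) w).

From HB Require Import structures.
From mathcomp Require Import all_boot zify.
From Stdlib Require Import ClassicalChoice.
Set Implicit Arguments. Unset Strict Implicit. Unset Printing Implicit Defensive.

(* If K has n cosets, then for a letter c and a suitable word y two of the
   words c^t y (t <= n) lie in the same coset, so y^-1 c^e y is in K for some
   1 <= e <= n, hence y^-1 c^M y is in K for M = 2 n!.  Splicing such
   conjugates T_l = l^-1 c^M l around the odd element w of K gives
   X = T_l1 w T_l2 T_l1 T_l2 of odd length, while Y = T_l1 (z^-1 c^M z) T_l2
   has even length, and z can be taken long enough that |Y| = |X| + 1.  With
   the letters c, l1, l2 chosen so that no cancellation ever occurs, X and Y
   begin and end with the same letters and concatenate freely, so K contains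
   words of every length p |X| + q (|X| + 1), i.e. of every length >= |X|^2. *)

Definition letter_code (x : letter) : nat :=
  match x with La => 0 | Lb => 1 | LaI => 2 | LbI => 3 end.
Definition code_letter (n : nat) : letter :=
  match n with 0 => La | 1 => Lb | 2 => LaI | _ => LbI end.
Lemma letter_codeK : cancel letter_code code_letter. Proof. by case. Qed.
HB.instance Definition _ := Equality.copy letter (can_type letter_codeK).

Lemma linvK : involutive linv. Proof. by case. Qed.

Lemma is_invE x y : is_inv x y = (y == linv x).
Proof. by case: x; case: y. Qed.

Lemma is_inv_linvr x y : is_inv x (linv y) = (x == y).
Proof. by rewrite is_invE (inj_eq (can_inj linvK)) eq_sym. Qed.

Lemma is_inv_linvl x y : is_inv (linv x) y = (y == x).
Proof. by rewrite is_invE linvK. Qed.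

Lemma is_inv_swap x y : is_inv (linv y) (linv x) = is_inv x y.
Proof. by case: x; case: y. Qed.

Lemma is_invC x y : is_inv x y = is_inv y x.
Proof. by case: x; case: y. Qed.

Lemma is_inv_linv x : is_inv x (linv x).
Proof. by rewrite is_invE. Qed.

Definition other_generator (x : letter) : letter :=
  match x with La | LaI => Lb | Lb | LbI => La end.

(* c is the letter to be conjugated and l1, l2 the conjugating letters; the
   conditions make every junction in consecutive_words free of cancellation,
   for a word of K that begins with f and ends with g. *)
Lemma exists_letters f g : exists c l1 l2,
  [/\ l1 \notin [:: c; linv c], l2 \notin [:: c; linv c], l1 != l2,
      ~~ is_inv l1 f & g != l2].
Proof.
have [->|gf] := eqVneq g (linv f).
  by exists f, (other_generator f), (linv (other_generator f)); case: f.
by exists (other_generator f), f, (linv f); move: gf; case: f; case: g.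
Qed.

Lemma reducedE x s : reduced (x :: s) = path (fun y z => ~~ is_inv y z) x s.
Proof. by elim: s x => //= y s IH x; rewrite IH. Qed.

Lemma reduced_behead x s : reduced (x :: s) -> reduced s.
Proof. by case: s => //= y s /andP[]. Qed.

Lemma reduced_cat_cons s x t :
  reduced (s ++ x :: t) = reduced (rcons s x) && reduced (x :: t).
Proof.
case: s => [|y s]; first by [].
by rewrite rcons_cons cat_cons !reducedE cat_path rcons_path /= andbA.
Qed.

Lemma last_nseq_self k (c : letter) : last c (nseq k c) = c.
Proof. by elim: k. Qed.

Lemma path_nseq_self k c : path (fun y z => ~~ is_inv y z) c (nseq k c).
Proof. by elim: k => //= k ->; rewrite is_invE; case: c. Qed.

Lemma reduced_rcons_nseq k c x : ~~ is_inv c x -> reduced (rcons (nseq k c) x).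
Proof.
case: k => [|k] // ncx; rewrite -[nseq _ _]/(c :: nseq k c) rcons_cons reducedE.
by rewrite rcons_path path_nseq_self last_nseq_self.
Qed.

Lemma winv_cat s t : winv (s ++ t) = winv t ++ winv s.
Proof. by rewrite /winv map_cat rev_cat. Qed.

Lemma winvK : involutive winv.
Proof. by move=> s; rewrite /winv map_rev revK -map_comp (eq_map linvK) map_id. Qed.

Lemma winv_cons x s : winv (x :: s) = rcons (winv s) (linv x).
Proof. by rewrite /winv map_cons rev_cons. Qed.

Lemma winv_rcons s x : winv (rcons s x) = linv x :: winv s.
Proof. by rewrite /winv map_rcons rev_rcons. Qed.

Lemma size_winv s : size (winv s) = size s.
Proof. by rewrite /winv size_rev size_map. Qed.

Lemma reduced_winv s : reduced (winv s) = reduced s.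
Proof.
case: s => [|x s] //.
rewrite /winv map_cons [linv x :: _]lastI rev_rcons !reducedE rev_path.
by elim: s x => //= y s IH x; rewrite IH is_inv_swap.
Qed.

Lemma reduced_push x w : reduced w -> reduced (push x w).
Proof.
case: w => [|y w] //= rw; case: ifP => [_|nxy]; first exact: reduced_behead rw.
by rewrite /= nxy.
Qed.

Lemma reduced_foldr_push w s : reduced w -> reduced (foldr push w s).
Proof. by move=> rw; elim: s => //= x s; apply: reduced_push. Qed.

Lemma reduced_reduce s : reduced (reduce s).
Proof. exact: reduced_foldr_push. Qed.

Lemma reduce_id s : reduced s -> reduce s = s.
Proof.
elim: s => [|x s IH] //= rs; rewrite IH ?(reduced_behead rs) //.
by case: s {IH} rs => [|y s] //= /andP[/negbTE->].
Qed.

Lemma push_linvK x w : reduced w -> push x (push (linv x) w) = w.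
Proof.
case: w => [|y w] /=; first by rewrite is_inv_linv.
rewrite is_inv_linvl; case: eqP => [->|_] rw; last by rewrite /= is_inv_linv.
by case: w rw => [|z w] //= /andP[/negbTE->].
Qed.

Lemma foldr_push_push w x r : reduced w -> reduced r ->
  foldr push w (push x r) = push x (foldr push w r).
Proof.
move=> rw; case: r => [|y r] //= rr; rewrite is_invE; case: eqP => // ->.
by rewrite push_linvK // reduced_foldr_push // (reduced_behead rr).
Qed.

(* Equality in F_2: s and t act in the same way on reduced words by left
   multiplication.  Quantifying over all reduced w, rather than comparing
   reduce s with reduce t, is what makes weq a congruence for ++. *)
Definition weq (s t : word) : Prop :=
  forall w, reduced w -> foldr push w s = foldr push w t.

Lemma weq_refl s : weq s s.
Proof. by []. Qed.

Lemma weq_sym s t : weq s t -> weq t s.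
Proof. by move=> st w rw; rewrite st. Qed.

Lemma weq_trans s t u : weq s t -> weq t u -> weq s u.
Proof. by move=> st tu w rw; rewrite st // tu. Qed.

Lemma weq_cat s1 t1 s2 t2 : weq s1 t1 -> weq s2 t2 -> weq (s1 ++ s2) (t1 ++ t2).
Proof. by move=> e1 e2 w rw; rewrite !foldr_cat e2 // e1 // reduced_foldr_push. Qed.

Lemma weq_catl s t u : weq t u -> weq (s ++ t) (s ++ u).
Proof. exact: weq_cat. Qed.

Lemma weq_reduce s : weq (reduce s) s.
Proof.
elim: s => [|x s IH] //= w rw.
by rewrite foldr_push_push ?reduced_reduce // IH.
Qed.

Lemma reduce_weq s t : weq s t -> reduced t -> reduce s = t.
Proof. by move=> st rt; rewrite -(reduce_id rt); apply: st. Qed.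

Lemma weq_catV s : weq (s ++ winv s) [::].
Proof.
elim: s => [|x s IH] // w rw.
by rewrite winv_cons -cats1 catA foldr_cat /= IH ?reduced_push // push_linvK.
Qed.

Lemma weq_cancel a s b : weq (a ++ s ++ winv s ++ b) (a ++ b).
Proof. by apply: weq_catl; rewrite catA -[b in weq _ b]cat0s; apply: weq_cat (weq_catV s) _. Qed.

Lemma weq_cancelV a s b : weq (a ++ winv s ++ s ++ b) (a ++ b).
Proof. by have := weq_cancel a (winv s) b; rewrite winvK. Qed.

Lemma weq_winv s t : weq s t -> weq (winv s) (winv t).
Proof.
move=> st; have := weq_cancel (winv s) t [::]; rewrite !cats0 => /weq_sym/weq_trans; apply.
apply: weq_trans (weq_catl _ (weq_cat (weq_sym st) (weq_refl _))) _.
exact: weq_cancelV [::] s (winv t).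
Qed.

Lemma weq_coset r x y : weq (winv (wmul (winv r) x) ++ wmul (winv r) y) (winv x ++ y).
Proof.
apply: weq_trans (weq_cat (weq_winv (weq_reduce _)) (weq_reduce _)) _.
by rewrite winv_cat winvK -catA; apply: weq_cancel.
Qed.

Definition conj_power (y : word) (c : letter) (k : nat) : word :=
  winv y ++ nseq k c ++ y.

Lemma weq_conj_powerD y c m n :
  weq (conj_power y c m ++ conj_power y c n) (conj_power y c (m + n)).
Proof. by rewrite /conj_power nseqD -!catA; apply/weq_catl/weq_cancel. Qed.

Lemma reduced_nseq_cat k c y0 ys :
  reduced (y0 :: ys) -> y0 != linv c -> reduced (nseq k c ++ y0 :: ys).
Proof. by move=> ry y0c; rewrite reduced_cat_cons ry andbT reduced_rcons_nseq ?is_invE. Qed.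

Lemma reduced_conj_power y0 ys c k : reduced (y0 :: ys) ->
  y0 \notin [:: c; linv c] -> 0 < k -> reduced (conj_power (y0 :: ys) c k).
Proof.
rewrite !inE negb_or => ry /andP[y0c y0c'].
case: k => // k _; rewrite /conj_power winv_cons cat_rcons reduced_cat_cons.
rewrite -winv_cons reduced_winv ry -cat_cons reduced_cat_cons ry andbT rcons_cons /=.
by rewrite is_inv_linvl eq_sym y0c; apply: reduced_rcons_nseq k.+1 _ _ _; rewrite is_invE.
Qed.

Definition spans (a b : letter) (u : word) : bool :=
  if u is x :: s then (x == a) && (last x s == b) else false.

Lemma spans_cat a b a' b' u v : spans a b u -> spans a' b' v -> spans a b' (u ++ v).
Proof.
case: u => // x s; case: v => // y t /andP[/eqP-> _] /andP[_ /eqP<-].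
by rewrite /= last_cat !eqxx.
Qed.

Lemma reduced_cat_spans a b a' b' u v : ~~ is_inv b a' ->
  spans a b u -> spans a' b' v -> reduced u -> reduced v -> reduced (u ++ v).
Proof.
case: u => // x s; case: v => // y t nba /andP[_ /eqP sb] /andP[/eqP ya _] ru rv.
by rewrite reduced_cat_cons rv andbT rcons_cons reducedE rcons_path -reducedE ru sb ya.
Qed.

Lemma spans_conj_power y0 ys c k :
  spans (linv (last y0 ys)) (last y0 ys) (conj_power (y0 :: ys) c k).
Proof. by rewrite /conj_power {1}[y0 :: ys]lastI winv_rcons /= !last_cat /= !eqxx. Qed.

Lemma pigeonhole_rel n (P : nat -> nat -> Prop) :
  (forall t, t <= n -> exists2 i, i < n & P t i) ->
  exists t t' i, [/\ t < t' <= n, P t i & P t' i].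
Proof.
move=> hP; have [f Pf] : exists f : 'I_n.+1 -> 'I_n, forall t : 'I_n.+1, P t (f t).
  apply: (choice (fun (t : 'I_n.+1) (i : 'I_n) => P t i)) => t.
  by have [i lt_in Pti] := hP t (ltn_ord t); exists (Ordinal lt_in).
have /injectivePn[t [t' neq_tt' eq_f]] : ~~ injectiveb f.
  by apply/injectiveP => /leq_card; rewrite !card_ord ltnn.
wlog lt_tt' : t t' neq_tt' eq_f / t < t'.
  move=> gen; case: (ltngtP t t') => [||/val_inj eq_tt']; first exact: gen.
    by apply: gen; rewrite 1?eq_sym.
  by rewrite eq_tt' eqxx in neq_tt'.
exists t, t', (f t); split; [by rewrite lt_tt' -ltnS ltn_ord | exact: Pf | rewrite eq_f; exact: Pf].
Qed.

Lemma consecutive_multiples A n : A * A <= n -> exists p q, n = p * A + q * A.+1.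
Proof.
case: A => [|A] le_n; first by exists 0, n; lia.
exists (n %/ A.+1 - n %% A.+1), (n %% A.+1).
have := divn_eq n A.+1; have := ltn_pmod n (ltn0Sn A).
have : A.+1 <= n %/ A.+1 by rewrite leq_divRL.
nia.
Qed.

Section Subgroup.

Variable K : word -> Prop.
Hypothesis HK : is_subgroup K.

Lemma subgroup_reduced u : K u -> reduced u.
Proof. by case: HK => + _ _ _; apply. Qed.

Lemma subgroup_weq u v t : K u -> K v -> weq (u ++ v) t -> reduced t -> K t.
Proof. by case: HK => _ _ mulK _ Ku Kv uvt rt; rewrite -(reduce_weq uvt rt); apply: mulK. Qed.

Lemma subgroup_cat_spans a b a' b' u v :
  K u /\ spans a b u -> K v /\ spans a' b' v -> ~~ is_inv b a' ->
  K (u ++ v) /\ spans a b' (u ++ v).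
Proof.
move=> [Ku su] [Kv sv] nba; split; last exact: spans_cat su sv.
apply: (subgroup_weq Ku Kv (weq_refl _)).
exact: reduced_cat_spans nba su sv (subgroup_reduced Ku) (subgroup_reduced Kv).
Qed.

Lemma subgroup_flatten_spans a b s : ~~ is_inv b a ->
  {in s, forall v, K v /\ spans a b v} -> K (flatten s).
Proof.
move=> nba; suff: {in s, forall v, K v /\ spans a b v} ->
    K (flatten s) /\ (flatten s = [::] \/ spans a b (flatten s)) by move=> /[apply] [[]].
elim: s => [|u s IH] good /=; first by split; [case: HK | left].
have [Ku su] := good u (mem_head _ _).
have [Ks [->|ss]] : K (flatten s) /\ (flatten s = [::] \/ spans a b (flatten s)).
- by apply: IH => v vs; apply: good; rewrite inE vs orbT.
- by rewrite cats0; split; last right.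
by have [] := subgroup_cat_spans (conj Ku su) (conj Ks ss) nba; split; last right.
Qed.

Lemma subgroup_all_lengths a b X Y : ~~ is_inv b a ->
  K X /\ spans a b X -> K Y /\ spans a b Y -> size Y = (size X).+1 ->
  forall n, size X * size X <= n -> exists w, K w /\ size w = n.
Proof.
move=> nba KX KY sizeY n /consecutive_multiples[p [q ->]].
exists (flatten (nseq p X ++ nseq q Y)); split.
  by apply: subgroup_flatten_spans nba _ => v; rewrite mem_cat => /orP[] /nseqP[-> _].
by rewrite size_flatten /shape map_cat !map_nseq sumn_cat !sumn_nseq sizeY mulnC [q * _]mulnC.
Qed.

Section FiniteIndex.

Variable reps : seq word.
Hypothesis cover : forall w, F2 w ->
  exists2 i, i < size reps & K (wmul (winv (nth [::] reps i)) w).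

Variables (c y0 : letter) (ys : word).
Hypotheses (ry : reduced (y0 :: ys)) (y0c : y0 \notin [:: c; linv c]).

Lemma exists_conj_power_mem : exists2 e, 0 < e <= size reps & K (conj_power (y0 :: ys) c e).
Proof.
have y0c' : y0 != linv c by move: y0c; rewrite !inE negb_or => /andP[].
have [t [t' [i [/andP[lt_tt' le_t'] Kt Kt']]]] := pigeonhole_rel
  (fun t _ => cover (reduced_nseq_cat t ry y0c')).
exists (t' - t); first by rewrite subn_gt0 lt_tt' /=; lia.
case: HK => _ _ _ invK.
apply: (subgroup_weq (invK _ Kt) Kt' _ (reduced_conj_power ry y0c _)); last by rewrite subn_gt0.
apply: weq_trans (weq_coset _ _ _) _.
by rewrite winv_cat -{1}(subnKC (ltnW lt_tt')) nseqD -!catA; apply: weq_cancelV.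
Qed.

Lemma conj_power_mul_mem e k : 0 < e -> 0 < k ->
  K (conj_power (y0 :: ys) c e) -> K (conj_power (y0 :: ys) c (k * e)).
Proof.
case: k => // k e_gt0 _ Ke; elim: k => [|k IH]; first by rewrite mul1n.
rewrite mulSn; apply: (subgroup_weq Ke IH (weq_conj_powerD _ _ _ _)).
by apply: reduced_conj_power; rewrite ?addn_gt0 ?e_gt0.
Qed.

Lemma conj_power_fact_mem k : 0 < k -> K (conj_power (y0 :: ys) c (k * (size reps)`!)).
Proof.
move=> k_gt0; have [e /andP[e_gt0 le_e] Ke] := exists_conj_power_mem.
have /dvdnP[m def_fact] : e %| (size reps)`! by rewrite dvdn_fact ?e_gt0.
have m_gt0 : 0 < m by move: (fact_gt0 (size reps)); rewrite def_fact muln_gt0 => /andP[].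
by rewrite def_fact mulnA; apply: conj_power_mul_mem; rewrite ?muln_gt0 ?k_gt0.
Qed.

End FiniteIndex.

Section ConsecutiveWords.

Variables (c : letter) (M : nat).
Hypotheses (M_even : ~~ odd M) (conj_power_mem : forall y0 ys, reduced (y0 :: ys) ->
  y0 \notin [:: c; linv c] -> K (conj_power (y0 :: ys) c M)).

Lemma conj_power_mem_spans y0 ys : reduced (y0 :: ys) -> y0 \notin [:: c; linv c] ->
  K (conj_power (y0 :: ys) c M) /\
  spans (linv (last y0 ys)) (last y0 ys) (conj_power (y0 :: ys) c M).
Proof. by move=> ry y0c; split; [apply: conj_power_mem | apply: spans_conj_power]. Qed.

Lemma consecutive_words f w' l1 l2 : K (f :: w') -> ~~ odd (size w') ->
  l1 \notin [:: c; linv c] -> l2 \notin [:: c; linv c] -> l1 != l2 ->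
  ~~ is_inv l1 f -> last f w' != l2 ->
  exists X Y, [/\ size Y = (size X).+1, K X /\ spans (linv l1) l2 X
                                      & K Y /\ spans (linv l1) l2 Y].
Proof.
move=> Kw w'_even l1c l2c ne_l12 nl1f ne_l2.
move: (l1c) (l2c); rewrite !inE => /norP[l1_c l1_c'] /norP[l2_c _].
pose T l := conj_power [:: l] c M.
(* the length of z is tuned so that |Y| = |X| + 1 *)
pose z := l1 :: c :: nseq (M./2 + (size w')./2 + 1) c.
have T1 : K (T l1) /\ spans (linv l1) l1 (T l1) := @conj_power_mem_spans l1 [::] erefl l1c.
have T2 : K (T l2) /\ spans (linv l2) l2 (T l2) := @conj_power_mem_spans l2 [::] erefl l2c.
have Kw' : K (f :: w') /\ spans f (last f w') (f :: w') by split; rewrite //= !eqxx.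
have rz : reduced z by rewrite /z reducedE /= path_nseq_self andbT is_invC is_invE.
have Tz : K (conj_power z c M) /\ spans (linv c) c (conj_power z c M).
  by have := conj_power_mem_spans rz l1c; rewrite /= (last_nseq_self _ c).
exists (T l1 ++ (f :: w') ++ T l2 ++ T l1 ++ T l2), (T l1 ++ conj_power z c M ++ T l2).
split.
  have := odd_double_half (size w'); have := odd_double_half M.
  rewrite (negbTE M_even) (negbTE w'_even) !size_cat !size_winv /= !size_nseq.
  by move=> halfM halfw; clear -halfM halfw; lia.
- apply: (subgroup_cat_spans T1 (subgroup_cat_spans Kw'
           (subgroup_cat_spans T2 (subgroup_cat_spans T1 T2 _) _) _) _);
    by rewrite ?is_inv_linvr // eq_sym.
- by apply: (subgroup_cat_spans T1 (subgroup_cat_spans Tz T2 _) _);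
    rewrite is_inv_linvr // eq_sym.
Qed.

End ConsecutiveWords.

End Subgroup.

Theorem lemma5p6 (K : word -> Prop) :
  is_subgroup K -> finite_index K ->
  (exists w, K w /\ odd (wlength w)) ->
  exists N : nat, forall n : nat, N <= n -> exists w, K w /\ wlength w = n.
Proof.
move=> HK [reps [_ cover]] [[|f w'] [Kw odd_w]] //.
have [c [l1 [l2 [l1c l2c ne_l12 nl1f ne_l2]]]] := exists_letters f (last f w').
have [|y0 ys ry y0c|X [Y [sizeY KX KY]]] :=
  consecutive_words HK (M := 2 * (size reps)`!) _ _ Kw odd_w l1c l2c ne_l12 nl1f ne_l2.
- by rewrite mul2n odd_double.
- exact: (conj_power_fact_mem HK cover ry y0c).
have nl2l1 : ~~ is_inv l2 (linv l1) by rewrite is_inv_linvr eq_sym.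
by exists (size X * size X) => n /(subgroup_all_lengths HK nl2l1 KX KY sizeY).
Qed.
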